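(* Let $p_0\in P_N$, $m\ge1$, $\beta\ge0$, and let $\Lambda_m$ be the set of irreducible $\nu\in\Sigma_{P_N}$ with $p_0\in\mathrm{supp}\,\nu$ and $|\mathrm{supp}\,\nu|=2m$. Then $\sum_{\nu\in\Lambda_m}\varphi_\beta(\nu)\le5^{m-1}\alpha_0(\beta)^m$.
   Context: $G=\mathbb Z_n$, $\rho$ faithful unitary one-dimensional. On $\mathbb Z^4$: $P_N$ is the set of oriented plaquettes (each with its opposite $-p$) with vertices in $B_N=[-N,N]^4\cap\mathbb Z^4$. A 2-form is $\nu:P_N\to G$ with $\nu_{-p}=-\nu_p$; $\Sigma_{P_N}$ is the set of closed 2-forms, i.e. $\sum_{p\in\partial c}\nu_p=0$ for every oriented 3-cell $c$ in $B_N$ (with $\partial c$ its six oriented boundary plaquettes); equivalently $\nu=d\sigma$ for some $G$-valued 1-form $\sigma$. $\varphi_r(g)=e^{r(\mathrm{Re}\rho(g)-1)}$, $\varphi_\beta(\nu)=\prod_{p\in P_N}\varphi_\beta(\nu_p)$, $\alpha_0(r)=\sum_{g\ne0}\varphi_r(g)^2$. $\nu$ is irreducible if there is no non-trivial $\nu'\in\Sigma_{P_N}$, $\nu'\neq\nu$, with $\nu'=\nu|_{\mathrm{supp}\,\nu'}$. *)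

From HB Require Import structures.
From mathcomp Require Import all_boot all_order all_algebra.
From mathcomp Require Import complex.
From mathcomp Require Import reals sequences exp.

Set Implicit Arguments.
Unset Strict Implicit.
Unset Printing Implicit Defensive.

Import Order.TTheory GRing.Theory Num.Theory.
Local Open Scope ring_scope.

(* The box B_N = [-N,N]^4 ∩ Z^4.  A coordinate c : 'I_(2N+1) represents the *)
(* integer c - N, so vertices of B_N are functions 'I_4 -> 'I_(2N+1).       *)
Definition vert (N : nat) := {ffun 'I_4 -> 'I_(N.*2).+1}.

(* x + e_i (only used when coordinate i of x is < 2N, i.e. stays in B_N). *)
Definition vshift (N : nat) (x : vert N) (i : 'I_4) : vert N :=
  [ffun k => if k == i then inord (x k).+1 else x k].

(* The oriented plaquette (x, i, j), i <> j, is the unit square with vertices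
   x, x+e_i, x+e_i+e_j, x+e_j (in this order); all vertices lie in B_N iff
   coordinates i and j of x are < 2N. *)
Definition is_plaq (N : nat) (q : vert N * 'I_4 * 'I_4) : bool :=
  let '(x, i, j) := q in
  [&& i != j, (x i < N.*2)%N & (x j < N.*2)%N].

Definition plaq (N : nat) := {q : vert N * 'I_4 * 'I_4 | @is_plaq N q}.

Definition popp (N : nat) (p : plaq N) : plaq N :=
  let '(x, i, j) := val p in insubd p (x, j, i).

Definition form (n N : nat) := {ffun plaq N -> 'Z_n}.

(* value of nu on the oriented plaquette (x,i,j) (0 if not a plaquette) *)
Definition nuv (n N : nat) (nu : form n N) (x : vert N) (i j : 'I_4) : 'Z_n :=
  if insub (x, i, j) is Some p then nu p else 0.

Definition two_form (n N : nat) (nu : form n N) : bool :=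
  [forall p : plaq N, nu (popp p) == - nu p].

(* Sum of nu over the six oriented boundary plaquettes of the oriented 3-cell
   at x spanned by e_i, e_j, e_k (i < j < k); the oppositely oriented cell
   gives the negative of this sum. *)
Definition cell_sum (n N : nat) (nu : form n N) (x : vert N) (i j k : 'I_4)
  : 'Z_n :=
  nuv nu (vshift x i) j k - nuv nu x j k
  - nuv nu (vshift x j) i k + nuv nu x i k
  + nuv nu (vshift x k) i j - nuv nu x i j.

Definition closed_form (n N : nat) (nu : form n N) : bool :=
  [forall x : vert N, forall i : 'I_4, forall j : 'I_4, forall k : 'I_4,
     [&& (i < j)%N, (j < k)%N, (x i < N.*2)%N, (x j < N.*2)%N & (x k < N.*2)%N]
     ==> (cell_sum nu x i j k == 0)].

Definition in_Sigma (n N : nat) (nu : form n N) : bool :=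
  two_form nu && closed_form nu.

Definition supp (n N : nat) (nu : form n N) : {set plaq N} :=
  [set p | nu p != 0].

Definition irreducible_form (n N : nat) (nu : form n N) : bool :=
  [forall nu' : form n N,
     [&& in_Sigma nu', nu' != 0 & nu' != nu] ==>
     ~~ [forall p in supp nu', nu' p == nu p]].

Definition Lambda (n N : nat) (p0 : plaq N) (m : nat) : {set form n N} :=
  [set nu : form n N | [&& in_Sigma nu, irreducible_form nu,
                          p0 \in supp nu & #|supp nu| == m.*2]].

Definition phi (R : realType) (n : nat) (rho : 'Z_n -> R[i]) (r : R) (g : 'Z_n)
  : R := expR (r * (complex.Re (rho g) - 1)).

Definition phi_form (R : realType) (n N : nat) (rho : 'Z_n -> R[i]) (r : R)
  (nu : form n N) : R := \prod_(p : plaq N) phi rho r (nu p).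

Definition alpha0 (R : realType) (n : nat) (rho : 'Z_n -> R[i]) (r : R) : R :=
  \sum_(g : 'Z_n | g != 0) phi rho r g ^+ 2.

(* Every nu in Lambda_m is reached from the zero form by filling, one pair of
   opposite plaquettes {q, -q} at a time, the values of nu.  Let ext_sum mu be
   the total weight of the nu in Lambda_m extending a 2-form mu.  If mu is
   closed, irreducibility forces nu = mu, so ext_sum mu = 0 unless mu already
   has 2m plaquettes.  Otherwise some 3-cell has nonzero boundary sum for mu;
   every extension nu is closed there, so it differs from mu on one of the at
   most five faces where mu vanishes.  Filling such a face with g <> 0
   multiplies the weight by phi(g) phi(-g), and sum_{g <> 0} phi(g) phi(-g)
   <= alpha_0.  By induction on the number t of missing pairs, ext_sum mu <=
   (5 alpha_0)^t phi(mu) (ext_sum_le).  The theorem is the first branching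
   step at p0, which contributes the last factor alpha_0. *)

From Pilot Require Import Defs.
From HB Require Import structures.
From mathcomp Require Import all_boot all_order all_algebra.
From mathcomp Require Import complex.
From mathcomp Require Import reals sequences exp.
From mathcomp Require Import zify ring lra.
Import Order.TTheory GRing.Theory Num.Theory.
Local Open Scope ring_scope.
Set Implicit Arguments. Unset Strict Implicit.

(* Not the sesquilinear forms of the algebra library. *)
Local Notation form := Defs.form.

Section NonnegSums.
Variables (R : numDomainType) (I : finType) (F : I -> R).

Lemma ler_sum_subset (P Q : pred I) :
  (forall i, Q i -> 0 <= F i) -> (forall i, P i -> Q i) ->
  \sum_(i | P i) F i <= \sum_(i | Q i) F i.
Proof.
move=> F_ge0 PQ; rewrite [leLHS]big_mkcond [leRHS]big_mkcond /=.
apply: ler_sum => i _; case: ifP => [/PQ -> //|_].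
by case: ifP => // /F_ge0.
Qed.

Lemma ler_sum_cover (J : finType) (A : {set J}) (C : J -> pred I) (P : pred I) :
  (forall i, P i -> 0 <= F i) -> (forall i, P i -> exists2 j, j \in A & C j i) ->
  \sum_(i | P i) F i <= \sum_(j in A) \sum_(i | P i && C j i) F i.
Proof.
move=> F_ge0 cover.
rewrite (eq_bigr (fun j => \sum_(i | P i && ((j \in A) && C j i)) F i));
  last by move=> j jA; apply: eq_bigl => i; rewrite jA.
rewrite -(exchange_big_dep (mem A)) /=; last by move=> i j _ /andP[].
apply: ler_sum => i Pi; have [j jA Cji] := cover i Pi.
rewrite (bigD1 j) /=; last by rewrite jA Cji.
by rewrite lerDl; apply: sumr_ge0 => k _; exact: F_ge0.
Qed.
End NonnegSums.

Section Plaquettes.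
Variable N : nat.

Lemma popp_val (p : plaq N) :
  val (popp p) = ((val p).1.1, (val p).2, (val p).1.2).
Proof.
case: p => [[[x i] j] pl] /=; rewrite /popp /= insubdK //.
by move: pl; rewrite /is_plaq unfold_in /= eq_sym => /and3P[-> -> ->].
Qed.

Lemma poppK : involutive (@popp N).
Proof. by move=> p; apply: val_inj; rewrite !popp_val; case: p => [[[]]]. Qed.

Lemma popp_neq (p : plaq N) : popp p != p.
Proof.
apply/eqP => /(congr1 val); rewrite popp_val; case: p => [[[x i] j] pl] /= [ji].
by move: pl; rewrite /is_plaq ji eqxx.
Qed.
End Plaquettes.

Section Forms.
Variables n N : nat.
Implicit Types (mu nu : form n N) (p q : plaq N) (g : 'Z_n).

Definition extends mu nu : bool := [forall p in supp mu, mu p == nu p].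

Definition upd mu q g : form n N :=
  [ffun p => if p == q then g else if p == popp q then - g else mu p].

Lemma extends0 nu : extends 0 nu.
Proof. by apply/forallP => p; rewrite inE ffunE eqxx. Qed.

Lemma two_form0 : two_form (0 : form n N).
Proof. by apply/forallP => p; rewrite !ffunE oppr0. Qed.

Lemma supp0 : supp (0 : form n N) = set0.
Proof. by apply/setP => p; rewrite !inE ffunE eqxx. Qed.

Lemma upd_two_form mu q g : two_form mu -> two_form (upd mu q g).
Proof.
move=> /forallP mu2; apply/forallP => p; rewrite !ffunE.
case: (eqVneq p q) => [->|pq]; first by rewrite (negbTE (popp_neq _)) !eqxx.
case: (eqVneq p (popp q)) => [->|pq']; first by rewrite poppK eqxx opprK.
have -> : (popp p == q) = false.
  by apply/negbTE; apply: contra pq' => /eqP <-; rewrite poppK.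
have -> : (popp p == popp q) = false.
  by apply/negbTE; apply: contra pq => /eqP /(can_inj (@poppK N)) ->.
exact: mu2.
Qed.

Lemma extends_upd mu nu q :
  two_form nu -> extends mu nu -> extends (upd mu q (nu q)) nu.
Proof.
move=> /forallP nu2 /forallP mu_nu; apply/forallP => p; apply/implyP.
rewrite inE !ffunE; case: (eqVneq p q) => [->|pq] //=.
case: (eqVneq p (popp q)) => [->|_] /=; first by rewrite (eqP (nu2 q)).
by move=> mup; move: (mu_nu p); rewrite inE mup.
Qed.

Lemma card_supp_upd mu q g :
  two_form mu -> mu q = 0 -> g != 0 -> #|supp (upd mu q g)| = (#|supp mu|).+2.
Proof.
move=> /forallP mu2 muq g0.
have muq' : mu (popp q) = 0 by rewrite (eqP (mu2 q)) muq oppr0.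
have -> : supp (upd mu q g) = q |: (popp q |: supp mu).
  apply/setP => p; rewrite !inE !ffunE.
  case: (eqVneq p q) => [->|_] //=.
  by case: (eqVneq p (popp q)) => [->|_] //=; rewrite oppr_eq0.
by rewrite !cardsU1 !inE muq muq' eqxx /= eq_sym (negbTE (popp_neq q)).
Qed.

Lemma extends_card_eq mu nu :
  extends mu nu -> (#|supp nu| <= #|supp mu|)%N -> nu = mu.
Proof.
move=> /forallP mu_nu card_le.
have sub : supp mu \subset supp nu.
  apply/subsetP => p mup; move: (mu_nu p); rewrite mup /= => /eqP nup.
  by rewrite inE -nup; rewrite inE in mup.
have /eqP supp_eq : supp mu == supp nu by rewrite eqEcard sub card_le.
apply/ffunP => p; case mup: (p \in supp mu).
  by move: (mu_nu p); rewrite mup => /eqP.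
have nup : p \notin supp nu by rewrite -supp_eq mup.
by move: mup nup; rewrite !inE => /negbFE/eqP -> /negbNE/eqP ->.
Qed.
End Forms.

Section Cells.
Variables n N : nat.
Implicit Types (mu nu : form n N).

Definition cell_face_triples (x : vert N) (i j k : 'I_4) :
    seq (vert N * 'I_4 * 'I_4) :=
  [:: (vshift x i, j, k); (x, j, k); (vshift x j, i, k);
      (x, i, k); (vshift x k, i, j); (x, i, j)].

Definition cell_faces (x : vert N) (i j k : 'I_4) : seq (plaq N) :=
  pmap insub (cell_face_triples x i j k).

Lemma cell_sum_agree mu nu x i j k :
  {in cell_faces x i j k, mu =1 nu} -> cell_sum mu x i j k = cell_sum nu x i j k.
Proof.
move=> agree.
have nuv_agree y a b :
    (y, a, b) \in cell_face_triples x i j k -> nuv mu y a b = nuv nu y a b.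
  rewrite /nuv; case E: (insub (y, a, b)) => [p|] // yab.
  by apply: agree; rewrite mem_pmap -E; exact: map_f.
by rewrite /cell_sum !nuv_agree // ?inE eqxx ?orbT.
Qed.

Lemma cell_sum0 x i j k : cell_sum (0 : form n N) x i j k = 0.
Proof.
have nuv0 y a b : nuv (0 : form n N) y a b = 0.
  by rewrite /nuv; case: insub => // p; rewrite ffunE.
by rewrite /cell_sum !nuv0 !(subr0, addr0).
Qed.

Lemma cell_face_differs mu nu x i j k :
  cell_sum mu x i j k != cell_sum nu x i j k ->
  exists2 q, q \in cell_faces x i j k & mu q != nu q.
Proof.
move=> neq; apply/hasP; apply: contraR neq => /hasPn agree.
by apply/eqP/cell_sum_agree => q /agree /negbNE /eqP.
Qed.

Lemma card_zero_faces mu x i j k : cell_sum mu x i j k != 0 ->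
  (#|[set q in cell_faces x i j k | mu q == 0%R]| <= 5)%N.
Proof.
move=> cell_nz; have [|q0 q0F] := @cell_face_differs mu 0 x i j k.
  by rewrite cell_sum0.
rewrite ffunE => muq0.
have sub : [set q in cell_faces x i j k | mu q == 0] \subset
           [set q in cell_faces x i j k] :\ q0.
  apply/subsetP => q; rewrite !inE => /andP[-> /eqP muq]; rewrite andbT.
  by apply: contra_neq muq0 => <-.
have faces_le6 : (#|[set q in cell_faces x i j k]| <= 6)%N.
  rewrite cardsE; apply: (leq_trans (card_size _)).
  by rewrite size_pmap_sub; exact: count_size.
apply: leq_trans (subset_leq_card sub) _; rewrite -ltnS.
by move: faces_le6; rewrite (cardsD1 q0) inE q0F.
Qed.
End Cells.

Section Weights.
Variables (R : realType) (n : nat) (rho : 'Z_n -> R[i]) (beta : R).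
Hypothesis phi0 : phi rho beta 0 = 1.
Local Notation ph := (phi rho beta).
Local Notation alpha := (alpha0 rho beta).

Lemma phi_ge0 g : 0 <= ph g.
Proof. exact: expR_ge0. Qed.

Lemma phi_form_ge0 N (mu : form n N) : 0 <= phi_form rho beta mu.
Proof. by apply: prodr_ge0 => p _; exact: phi_ge0. Qed.

Lemma alpha0_ge0 : 0 <= alpha.
Proof. by apply: sumr_ge0 => g _; exact: sqr_ge0. Qed.

Lemma five_alpha0_exp_ge0 t : 0 <= (5 * alpha) ^+ t.
Proof. by apply/exprn_ge0/mulr_ge0; [exact: ler0n | exact: alpha0_ge0]. Qed.

Lemma phi_form0 N : phi_form rho beta (0 : form n N) = 1.
Proof. by apply: big1 => p _; rewrite ffunE phi0. Qed.

Lemma phi_form_upd N (mu : form n N) q g : mu q = 0 -> mu (popp q) = 0 ->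
  phi_form rho beta (upd mu q g) = phi_form rho beta mu * (ph g * ph (- g)).
Proof.
move=> muq muq'.
have factor p : ph (upd mu q g p) =
    ph (mu p) * (if p == q then ph g else 1) * (if p == popp q then ph (- g) else 1).
  rewrite ffunE; case: (eqVneq p q) => [->|pq].
    by rewrite muq phi0 eq_sym (negbTE (popp_neq _)) mulr1 mul1r.
  by case: (eqVneq p (popp q)) => [->|_]; rewrite ?muq' ?phi0 !mulr1 ?mul1r.
rewrite /phi_form (eq_bigr _ (fun p _ => factor p)) !big_split /=.
by rewrite -!big_mkcond /= !big_pred1_eq mulrA.
Qed.

(* By AM-GM, sum_{g <> 0} phi(g) phi(-g) <= alpha_0. *)
Lemma sum_phi_opp_le : \sum_(g : 'Z_n | g != 0) ph g * ph (- g) <= alpha.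
Proof.
have alpha_opp : \sum_(g : 'Z_n | g != 0) ph (- g) ^+ 2 = alpha.
  rewrite /alpha0 [RHS](reindex_inj oppr_inj) /=.
  by apply: eq_bigl => g; rewrite oppr_eq0.
apply: (le_trans (y := \sum_(g : 'Z_n | g != 0) (ph g ^+ 2 + ph (- g) ^+ 2) / 2)).
  apply: ler_sum => g _; have := sqr_ge0 (ph g - ph (- g)); nra.
by rewrite -mulr_suml big_split /= alpha_opp /alpha0; lra.
Qed.
End Weights.

Section Lambda.
Variables (n N : nat) (p0 : plaq N) (m : nat).
Implicit Types (mu nu : form n N).

Lemma Lambda_two_form nu : nu \in Lambda n p0 m -> two_form nu.
Proof. by rewrite inE => /and4P[/andP[]]. Qed.

Lemma Lambda_p0 nu : nu \in Lambda n p0 m -> nu p0 != 0.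
Proof. by rewrite inE => /and4P[_ _]; rewrite inE. Qed.

Lemma card_supp_Lambda nu : nu \in Lambda n p0 m -> #|supp nu| = m.*2.
Proof. by rewrite inE => /and4P[_ _ _ /eqP]. Qed.

Lemma Lambda_extends_eq mu nu :
  nu \in Lambda n p0 m -> extends mu nu -> in_Sigma mu -> mu != 0 -> mu = nu.
Proof.
rewrite inE => /and4P[_ /forallP /(_ mu) irr _ _] mu_nu muS mu0.
apply/eqP; apply: contraTT mu_nu => mu_neq; apply: (implyP irr).
by rewrite muS mu0 mu_neq.
Qed.
End Lambda.

Section Counting.
Variables (R : realType) (n : nat) (rho : 'Z_n -> R[i]) (beta : R).
Variables (N : nat) (p0 : plaq N) (m : nat).
Hypothesis phi0 : phi rho beta 0 = 1.
Implicit Types (mu nu : form n N) (q : plaq N).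
Local Notation phf := (phi_form rho beta).
Local Notation alpha := (alpha0 rho beta).

Definition ext_sum mu : R :=
  \sum_(nu | (nu \in Lambda n p0 m) && extends mu nu) phf nu.

Definition branch_sum mu q : R :=
  \sum_(nu | (nu \in Lambda n p0 m) && extends mu nu && (nu q != 0)) phf nu.

(* Sorting the extensions nonzero at q by their value g = nu q: each of them
   extends upd mu q g. *)
Lemma branch_sum_le mu q :
  branch_sum mu q <= \sum_(g : 'Z_n | g != 0) ext_sum (upd mu q g).
Proof.
rewrite /branch_sum (partition_big (fun nu => nu q) (fun g => g != 0)) /=;
  last by move=> nu /andP[].
apply: ler_sum => g _; apply: ler_sum_subset => [nu _|nu]; first exact: phi_form_ge0.
move=> /andP[/andP[/andP[nuL mu_nu] _] /eqP <-].
by rewrite nuL extends_upd // (Lambda_two_form nuL).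
Qed.

Lemma branch_sum_bound mu q (C : R) :
  0 <= C -> two_form mu -> mu q = 0 ->
  (forall g, g != 0 -> ext_sum (upd mu q g) <= C * phf (upd mu q g)) ->
  branch_sum mu q <= C * alpha * phf mu.
Proof.
move=> C_ge0 /forallP mu2 muq child_bound.
have muq' : mu (popp q) = 0 by rewrite (eqP (mu2 q)) muq oppr0.
apply: (le_trans (branch_sum_le mu q)).
apply: (le_trans (y := \sum_(g : 'Z_n | g != 0) C * phf (upd mu q g))).
  by apply: ler_sum => g; exact: child_bound.
under eq_bigr => g _ do rewrite (phi_form_upd phi0 _ muq muq').
rewrite -mulr_sumr -mulr_sumr mulrA [leRHS]mulrAC; apply: ler_wpM2l.
  by apply: mulr_ge0 => //; exact: phi_form_ge0.
exact: sum_phi_opp_le.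
Qed.

Lemma ext_sum_closed mu :
  in_Sigma mu -> mu != 0 -> #|supp mu| != m.*2 -> ext_sum mu = 0.
Proof.
move=> muS mu0 card_neq; apply: big1 => nu /andP[nuL mu_nu].
move: card_neq; rewrite (Lambda_extends_eq nuL mu_nu muS mu0).
by rewrite (card_supp_Lambda nuL) eqxx.
Qed.

(* One step of the tree expansion: every extension nu in Lambda_m of mu is
   closed, so on a cell where mu is not it differs from mu on a face, where mu
   must vanish and nu not; there are at most five such faces. *)
Lemma ext_sum_step mu (x : vert N) (i j k : 'I_4) (C : R) :
  0 <= C -> two_form mu ->
  [&& (i < j)%N, (j < k)%N, (x i < N.*2)%N, (x j < N.*2)%N & (x k < N.*2)%N] ->
  cell_sum mu x i j k != 0 ->
  (forall q g, mu q = 0 -> g != 0 -> ext_sum (upd mu q g) <= C * phf (upd mu q g)) ->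
  ext_sum mu <= 5 * (C * alpha * phf mu).
Proof.
move=> C_ge0 mu2 cell_in cell_nz child_bound.
pose zero_faces := [set q in cell_faces x i j k | mu q == 0].
apply: (le_trans (y := \sum_(q in zero_faces) branch_sum mu q)).
  apply: ler_sum_cover => [nu _|nu /andP[nuL mu_nu]]; first exact: phi_form_ge0.
  have nu_closed : cell_sum nu x i j k = 0.
    move: nuL; rewrite inE => /and4P[/andP[_ /forallP /(_ x) nuC] _ _ _].
    move: nuC => /forallP /(_ i) /forallP /(_ j) /forallP /(_ k).
    by move=> /implyP /(_ cell_in) /eqP.
  have [|q qF mu_neq] := @cell_face_differs n N mu nu x i j k.
    by rewrite nu_closed.
  have muq : mu q = 0.
    by apply: contraNeq mu_neq => muq; move/forallP: mu_nu => /(_ q); rewrite inE muq.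
  by exists q; rewrite ?inE ?qF -?muq ?eqxx // eq_sym.
apply: (le_trans (y := \sum_(q in zero_faces) C * alpha * phf mu)).
  apply: ler_sum => q; rewrite inE => /andP[_ /eqP muq].
  by apply: branch_sum_bound => // g; exact: child_bound.
rewrite sumr_const -[leLHS]mulr_natl; apply: ler_wpM2r.
  by apply: mulr_ge0; [apply: mulr_ge0 => //; exact: alpha0_ge0 | exact: phi_form_ge0].
by rewrite ler_nat; exact: card_zero_faces.
Qed.

Lemma ext_sum_le t : (t < m)%N -> forall mu, two_form mu ->
  #|supp mu| = (m - t).*2 -> ext_sum mu <= (5 * alpha) ^+ t * phf mu.
Proof.
elim: t => [|t IH] t_lt mu mu2 card_mu.
  (* No pair is missing: the only extension is mu itself. *)
  rewrite expr0 mul1r -[leRHS](big_pred1_eq +%R mu phf).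
  apply: ler_sum_subset => [nu _|nu /andP[nuL mu_nu]]; first exact: phi_form_ge0.
  apply/eqP/(extends_card_eq mu_nu).
  by rewrite (card_supp_Lambda nuL) card_mu subn0.
have mu0 : mu != 0.
  by apply/eqP => mu_eq; move: card_mu; rewrite mu_eq supp0 cards0; lia.
have [mu_closed|/forallPn[x /forallPn[i /forallPn[j /forallPn[k]]]]] :=
  boolP (closed_form mu).
  (* mu is closed but too small: irreducibility leaves no extension. *)
  rewrite ext_sum_closed ?mulr_ge0 ?five_alpha0_exp_ge0 ?phi_form_ge0 //.
    by apply/andP.
  by rewrite card_mu; apply/eqP; lia.
rewrite negb_imply => /andP[cell_in cell_nz].
have -> : (5 * alpha) ^+ t.+1 * phf mu = 5 * ((5 * alpha) ^+ t * alpha * phf mu).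
  by rewrite exprS; ring.
apply: (ext_sum_step (five_alpha0_exp_ge0 rho beta t) mu2 cell_in cell_nz) => q g muq g0.
apply: IH (upd_two_form q g mu2) _; first exact: ltnW.
by rewrite card_supp_upd // card_mu; lia.
Qed.
End Counting.

Lemma hom_unit_at0 (G : zmodType) (F : numFieldType) (f : G -> F) :
  (forall g h, f (g + h) = f g * f h) -> `|f 0| = 1 -> f 0 = 1.
Proof.
move=> f_hom f0_norm; have f0_neq0 : f 0 != 0.
  by apply: contra_eq_neq f0_norm => ->; rewrite normr0 eq_sym oner_neq0.
by apply: (mulfI f0_neq0); rewrite mulr1 -f_hom addr0.
Qed.

Theorem mainTheorem11 (R : realType) (n : nat) (hn : (1 < n)%N)
  (rho : 'Z_n -> R[i])
  (rho_hom : forall g h : 'Z_n, rho (g + h) = rho g * rho h)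
  (rho_unitary : forall g : 'Z_n, `|rho g| = 1)
  (rho_faithful : injective rho)
  (N : nat) (p0 : plaq N) (m : nat) (hm : (1 <= m)%N)
  (beta : R) (hbeta : 0 <= beta) :
  \sum_(nu in Lambda n p0 m) phi_form rho beta nu
    <= 5 ^+ m.-1 * alpha0 rho beta ^+ m.
Proof.
have phi0 : phi rho beta 0 = 1.
  by rewrite /phi (hom_unit_at0 rho_hom) // subrr mulr0 expR0.
(* Every nu in Lambda_m extends the zero form and is nonzero at p0. *)
have -> : \sum_(nu in Lambda n p0 m) phi_form rho beta nu =
          branch_sum rho beta p0 m 0 p0.
  apply: eq_bigl => nu; rewrite extends0 andbT.
  by case: (boolP (nu \in _)) => // /Lambda_p0 ->.
have -> : 5 ^+ m.-1 * alpha0 rho beta ^+ m =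
          (5 * alpha0 rho beta) ^+ m.-1 * alpha0 rho beta *
          phi_form rho beta (0 : form n N).
  by rewrite phi_form0 // mulr1 exprMn -mulrA -exprSr prednK.
(* Branch at p0; the remaining m - 1 pairs are bounded by ext_sum_le. *)
apply: (branch_sum_bound phi0).
- exact: five_alpha0_exp_ge0.
- exact: two_form0.
- by rewrite ffunE.
move=> g g0; apply: (ext_sum_le p0 phi0).
- by rewrite prednK.
- exact/upd_two_form/two_form0.
- by rewrite card_supp_upd ?two_form0 ?ffunE // supp0 cards0; lia.
Qed.
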